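(* Let $H=\mathrm{sh}_0(G_{\mathtt{ALD}})$ and let $M$ be the set of cosets $gH$, $g\in G_{\mathtt{ALD}}$. Then the operations $(gH)*(hH):=(g*h)H$ and $(gH)\circ(hH):=(g\circ h)H$ are well defined on $M$, and $(M,*,\circ)$ is an $\mathtt{ALD}$-algebra, i.e. it satisfies $a*(b*c)=(a*b)*(a*c)$, $a*(b\circ c)=(a*b)\circ(a*c)$ and $a*(b*c)=(a\circ b)*c$ for all $a,b,c\in M$.
   Context: Addresses are finite sequences over $\{0,1\}$, $\varepsilon$ empty, concatenation by juxtaposition; incomparable means neither is a prefix of the other. $G_{\mathtt{ALD}}$ is the group generated by $S_\alpha,A_\alpha$ ($\alpha\in\{0,1\}^*$) subject to the relations, with $X,Y\in\{S,A\}$ and arbitrary addresses $\alpha,\beta,\delta$ ($\delta$ possibly empty): $X_\alpha Y_\beta=Y_\beta X_\alpha$ for $\alpha,\beta$ incomparable; $X_{\alpha0\delta}S_\alpha=S_\alpha X_{\alpha00\delta}X_{\alpha10\delta}$; $X_{\alpha10\delta}S_\alpha=S_\alpha X_{\alpha01\delta}$; $X_{\alpha11\delta}S_\alpha=S_\alpha X_{\alpha11\delta}$; $X_{\alpha0\delta}A_\alpha=A_\alpha X_{\alpha00\delta}$; $X_{\alpha10\delta}A_\alpha=A_\alpha X_{\alpha01\delta}$; $X_{\alpha11\delta}A_\alpha=A_\alpha X_{\alpha1\delta}$; $S_\alpha S_{\alpha1}S_\alpha=S_{\alpha1}S_\alpha S_{\alpha1}S_{\alpha0}$; $S_\alpha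 S_{\alpha1}A_\alpha=A_{\alpha1}S_\alpha S_{\alpha0}$; $A_\alpha S_\alpha=S_{\alpha1}S_\alpha A_{\alpha1}A_{\alpha0}$. $\mathrm{sh}_\beta$ is the endomorphism with $S_\alpha\mapsto S_{\beta\alpha}$, $A_\alpha\mapsto A_{\beta\alpha}$. On $G_{\mathtt{ALD}}$: $g*h:=g\,\mathrm{sh}_1(h)\,S_\varepsilon\,\mathrm{sh}_1(g)^{-1}$ and $g\circ h:=g\,\mathrm{sh}_1(h)\,A_\varepsilon$. *)

(* The group G_ALD is given by a presentation;
   we realise it as words in the generators and their inverses modulo the
   congruence generated by free cancellation and the defining relations. *)
From mathcomp Require Import all_boot.
Set Implicit Arguments. Unset Strict Implicit. Unset Printing Implicit Defensive.

(* addresses: finite sequences over {0,1}, 0 = false, 1 = true *)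
Definition addr := seq bool.

Inductive kind := KS | KA.

Record gen := Gen { gkind : kind; gaddr : addr }.

(* a letter: a generator (false) or its inverse (true) *)
Definition letter := (gen * bool)%type.
Definition word := seq letter.

Definition lt (k : kind) (a : addr) : letter := (Gen k a, false).
Definition S_ (a : addr) : word := [:: lt KS a].
Definition A_ (a : addr) : word := [:: lt KA a].
Definition X_ (k : kind) (a : addr) : word := [:: lt k a].

Definition winv (w : word) : word := rev (map (fun l => (l.1, ~~ l.2)) w).

Definition sh (b : addr) (w : word) : word :=
  map (fun l => (Gen (gkind l.1) (b ++ gaddr l.1), l.2)) w.

Definition incomparable (a b : addr) : bool := ~~ prefix a b && ~~ prefix b a.

Inductive ald_rel : word -> word -> Prop :=
| rel_cancel1 (l : letter) : ald_rel [:: l; (l.1, ~~ l.2)] [::]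
| rel_comm X Y (a b : addr) : incomparable a b ->
    ald_rel (X_ X a ++ X_ Y b) (X_ Y b ++ X_ X a)
| rel_S0 X (a d : addr) :
    ald_rel (X_ X (a ++ false :: d) ++ S_ a)
            (S_ a ++ X_ X (a ++ false :: false :: d) ++ X_ X (a ++ true :: false :: d))
| rel_S10 X (a d : addr) :
    ald_rel (X_ X (a ++ true :: false :: d) ++ S_ a)
            (S_ a ++ X_ X (a ++ false :: true :: d))
| rel_S11 X (a d : addr) :
    ald_rel (X_ X (a ++ true :: true :: d) ++ S_ a)
            (S_ a ++ X_ X (a ++ true :: true :: d))
| rel_A0 X (a d : addr) :
    ald_rel (X_ X (a ++ false :: d) ++ A_ a)
            (A_ a ++ X_ X (a ++ false :: false :: d))
| rel_A10 X (a d : addr) :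
    ald_rel (X_ X (a ++ true :: false :: d) ++ A_ a)
            (A_ a ++ X_ X (a ++ false :: true :: d))
| rel_A11 X (a d : addr) :
    ald_rel (X_ X (a ++ true :: true :: d) ++ A_ a)
            (A_ a ++ X_ X (a ++ true :: d))
| rel_SSS (a : addr) :
    ald_rel (S_ a ++ S_ (a ++ [:: true]) ++ S_ a)
            (S_ (a ++ [:: true]) ++ S_ a ++ S_ (a ++ [:: true]) ++ S_ (a ++ [:: false]))
| rel_SSA (a : addr) :
    ald_rel (S_ a ++ S_ (a ++ [:: true]) ++ A_ a)
            (A_ (a ++ [:: true]) ++ S_ a ++ S_ (a ++ [:: false]))
| rel_AS (a : addr) :
    ald_rel (A_ a ++ S_ a)
            (S_ (a ++ [:: true]) ++ S_ a ++ A_ (a ++ [:: true]) ++ A_ (a ++ [:: false])).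

Inductive ald_step : word -> word -> Prop :=
| step_at (u v l r : word) : ald_rel l r -> ald_step (u ++ l ++ v) (u ++ r ++ v).

Inductive ald_eq : word -> word -> Prop :=
| ald_refl w : ald_eq w w
| ald_stepE w1 w2 : ald_step w1 w2 -> ald_eq w1 w2
| ald_sym w1 w2 : ald_eq w1 w2 -> ald_eq w2 w1
| ald_trans w1 w2 w3 : ald_eq w1 w2 -> ald_eq w2 w3 -> ald_eq w1 w3.

Definition ald_star (g h : word) : word :=
  g ++ sh [:: true] h ++ S_ [::] ++ winv (sh [:: true] g).
Definition ald_circ (g h : word) : word :=
  g ++ sh [:: true] h ++ A_ [::].

Definition inH (w : word) : Prop := exists u : word, ald_eq w (sh [:: false] u).

Definition same_coset (g g' : word) : Prop := inH (winv g ++ g').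

From mathcomp Require Import all_boot.
From Stdlib Require Import Setoid Morphisms.
Set Implicit Arguments. Unset Strict Implicit. Unset Printing Implicit Defensive.

(* The relations with arbitrary delta say how conjugation by S and A acts on
   shifted words: sh_0(u) S = S sh_00(u) sh_10(u), sh_10(u) S = S sh_01(u),
   sh_11(u) S = S sh_11(u), sh_0(u) A = A sh_00(u), sh_10(u) A = A sh_01(u),
   sh_11(u) A = A sh_1(u); moreover words shifted into disjoint subtrees
   commute.  Hence a right factor sh_0(u) of g or h can be pushed to the right
   end of g * h and g o h, where it is again in H.  For the laws, the same
   rules together with the root relations S S_1 S = S_1 S S_1 S_0,
   S S_1 A = A_1 S S_0 and A S = S_1 S A_1 A_0 turn one side into the other
   followed by S_0 or A_0, which lie in H. *)

Add Parametric Relation : word ald_eq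
  reflexivity proved by ald_refl
  symmetry proved by ald_sym
  transitivity proved by ald_trans as ald_eq_rel.

Infix "=G" := ald_eq (at level 70).
#[local] Hint Resolve ald_refl : core.

Lemma ald_eq_ctx p q a b : a =G b -> p ++ a ++ q =G p ++ b ++ q.
Proof.
elim=> [w|w1 w2 [u v l r Hlr]|w1 w2 _ IH|w1 w2 w3 _ IH1 _ IH2].
- by [].
- apply: ald_stepE; have := step_at (p ++ u) (v ++ q) Hlr; by rewrite -!catA.
- by symmetry.
- by transitivity (p ++ w2 ++ q).
Qed.

Add Parametric Morphism : (@cat letter) with signature
  ald_eq ==> ald_eq ==> ald_eq as cat_ald_eq.
Proof.
move=> x y Hxy x' y' Hxy'; transitivity (y ++ x').
- exact: (ald_eq_ctx [::] x' Hxy).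
- by have := ald_eq_ctx y [::] Hxy'; rewrite !cats0.
Qed.

Lemma ald_rel_eq l r : ald_rel l r -> l =G r.
Proof. by move=> Hlr; apply: ald_stepE; have := step_at [::] [::] Hlr; rewrite /= !cats0. Qed.

Lemma winv_cat u v : winv (u ++ v) = winv v ++ winv u.
Proof. by rewrite /winv map_cat rev_cat. Qed.

Lemma winvK w : winv (winv w) = w.
Proof.
rewrite /winv map_rev revK -map_comp.
by elim: w => //= [[g b] w] ->; rewrite negbK.
Qed.

Lemma sh_cat p u v : sh p (u ++ v) = sh p u ++ sh p v.
Proof. by rewrite /sh map_cat. Qed.

Lemma sh_sh p q w : sh p (sh q w) = sh (p ++ q) w.
Proof. by rewrite /sh -map_comp; apply: eq_map => -[[k a] b] /=; rewrite catA. Qed.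

Lemma winv_sh p w : winv (sh p w) = sh p (winv w).
Proof. by rewrite /winv /sh map_rev -!map_comp. Qed.

Lemma mulwV w : w ++ winv w =G [::].
Proof.
elim: w => [|l w IH] //.
have -> : winv (l :: w) = winv w ++ [:: (l.1, ~~ l.2)].
  by rewrite /winv map_cons rev_cons -cats1.
transitivity ([:: l] ++ (w ++ winv w) ++ [:: (l.1, ~~ l.2)]); first by rewrite -catA.
by rewrite IH; apply: ald_rel_eq; exact: rel_cancel1.
Qed.

Lemma mulVw w : winv w ++ w =G [::].
Proof. by rewrite -{2}(winvK w) mulwV. Qed.

Lemma mulKVw w r : w ++ winv w ++ r =G r.
Proof. by rewrite catA mulwV. Qed.

Lemma mulKw w r : winv w ++ w ++ r =G r.
Proof. by rewrite catA mulVw. Qed.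

Add Parametric Morphism : winv with signature ald_eq ==> ald_eq as winv_ald_eq.
Proof.
move=> x y Hxy.
transitivity (winv x ++ y ++ winv y); first by rewrite mulwV cats0.
by rewrite -{1}Hxy mulKw.
Qed.

Lemma sh_rel p l r : ald_rel l r -> ald_rel (sh p l) (sh p r).
Proof.
case.
- by case=> [[k a] b]; exact: (rel_cancel1 (Gen k (p ++ a), b)).
- move=> X Y a b Hab; apply: rel_comm.
  by move: Hab; rewrite /incomparable !prefix_catr // eqxx.
- by move=> X a d; have := rel_S0 X (p ++ a) d; rewrite -!catA.
- by move=> X a d; have := rel_S10 X (p ++ a) d; rewrite -!catA.
- by move=> X a d; have := rel_S11 X (p ++ a) d; rewrite -!catA.
- by move=> X a d; have := rel_A0 X (p ++ a) d; rewrite -!catA.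
- by move=> X a d; have := rel_A10 X (p ++ a) d; rewrite -!catA.
- by move=> X a d; have := rel_A11 X (p ++ a) d; rewrite -!catA.
- by move=> a; have := rel_SSS (p ++ a); rewrite -!catA.
- by move=> a; have := rel_SSA (p ++ a); rewrite -!catA.
- by move=> a; have := rel_AS (p ++ a); rewrite -!catA.
Qed.

Add Parametric Morphism p : (sh p) with signature ald_eq ==> ald_eq as sh_ald_eq.
Proof.
move=> x y; elim=> [w|w1 w2 [u v l r Hlr]|w1 w2 _ IH|w1 w2 w3 _ IH1 _ IH2].
- by [].
- by rewrite !sh_cat; apply/ald_eq_ctx/ald_rel_eq/sh_rel.
- by symmetry.
- by transitivity (sh p w2).
Qed.

Add Parametric Morphism : ald_star with signature
  ald_eq ==> ald_eq ==> ald_eq as ald_star_ald_eq.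
Proof. by move=> g g' Hg h h' Hh; rewrite /ald_star Hg Hh. Qed.

Add Parametric Morphism : ald_circ with signature
  ald_eq ==> ald_eq ==> ald_eq as ald_circ_ald_eq.
Proof. by move=> g g' Hg h h' Hh; rewrite /ald_circ Hg Hh. Qed.

Lemma conj_winv x t r : x ++ t =G t ++ r -> winv x ++ t =G t ++ winv r.
Proof.
move=> Hxt; transitivity (winv x ++ (t ++ r) ++ winv r); first by rewrite -catA mulwV cats0.
by rewrite -Hxt -catA mulKw.
Qed.

Lemma letters_comm k1 k2 a b s1 s2 : incomparable a b ->
  [:: (Gen k1 a, s1); (Gen k2 b, s2)] =G [:: (Gen k2 b, s2); (Gen k1 a, s1)].
Proof.
move=> Hab.
have Eab : X_ k1 a ++ X_ k2 b =G X_ k2 b ++ X_ k1 a by apply/ald_rel_eq/rel_comm.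
have EVa := conj_winv Eab.
have EVb := conj_winv (ald_sym Eab).
have EVab := conj_winv (ald_sym EVa).
by case: s1; case: s2; [symmetry | | symmetry | ].
Qed.

Definition shl (p : addr) (l : letter) : letter := (Gen (gkind l.1) (p ++ gaddr l.1), l.2).

Lemma sh_cons p l w : sh p (l :: w) = shl p l :: sh p w.
Proof. by []. Qed.

Lemma sh_comm x y a b u v : x != y ->
  sh (x :: a) u ++ sh (y :: b) v =G sh (y :: b) v ++ sh (x :: a) u.
Proof.
move=> Hxy.
have Hl l : shl (x :: a) l :: sh (y :: b) v =G sh (y :: b) v ++ [:: shl (x :: a) l].
  case: l => [[k1 d1] s1]; elim: v => [|[[k2 d2] s2] v IH] //=.
  have Hinc : incomparable (x :: a ++ d1) (y :: b ++ d2).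
    by rewrite /incomparable !prefix_cons [y == x]eq_sym (negbTE Hxy).
  transitivity ([:: (Gen k2 (y :: b ++ d2), s2); (Gen k1 (x :: a ++ d1), s1)] ++ sh (y :: b) v).
    exact: (cat_ald_eq (letters_comm k1 k2 s1 s2 Hinc) (ald_refl _)).
  exact: (cat_ald_eq (ald_refl [:: _]) IH).
elim: u => [|l u IH]; first by rewrite cats0.
by rewrite sh_cons -cat1s -catA IH catA cat1s Hl -catA.
Qed.

Lemma sh_conj p q t : (forall k d, X_ k (p ++ d) ++ t =G t ++ X_ k (q ++ d)) ->
  forall u, sh p u ++ t =G t ++ sh q u.
Proof.
move=> Hpq.
have Hl l : shl p l :: t =G t ++ [:: shl q l].
  by case: l => [[k d] [|]]; [exact: (conj_winv (Hpq k d)) | apply: Hpq].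
elim=> [|l u IH]; first by rewrite cats0.
by rewrite sh_cons -cat1s -catA IH catA cat1s Hl -catA.
Qed.

Lemma sh_conj_split p x y a b t : x != y ->
  (forall k d, X_ k (p ++ d) ++ t =G t ++ X_ k ((x :: a) ++ d) ++ X_ k ((y :: b) ++ d)) ->
  forall u, sh p u ++ t =G t ++ sh (x :: a) u ++ sh (y :: b) u.
Proof.
move=> Hxy Hp.
have Hl l : shl p l :: t =G t ++ [:: shl (x :: a) l; shl (y :: b) l].
  case: l => [[k d] [|]]; last exact: Hp.
  have := conj_winv (Hp k d); rewrite winv_cat => /ald_trans; apply.
  apply: cat_ald_eq => //.
  by apply: (sh_comm b a [:: (Gen k d, true)] [:: (Gen k d, true)]); rewrite eq_sym.
elim=> [|l u IH]; first by rewrite !cats0.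
rewrite sh_cons -cat1s -catA IH catA cat1s Hl -catA.
apply: cat_ald_eq => //=; apply: (cat_ald_eq (ald_refl [:: _])).
have := cat_ald_eq (sh_comm a b u [:: l] Hxy) (ald_refl (sh (y :: b) u)).
by rewrite -!catA; symmetry.
Qed.

Lemma sh0_S u r :
  sh [:: false] u ++ S_ [::] ++ r =G S_ [::] ++ sh [:: false; false] u ++ sh [:: true; false] u ++ r.
Proof.
rewrite catA (@sh_conj_split _ false true [:: false] [:: false]) ?catA //.
move=> k d; exact: (ald_rel_eq (rel_S0 k [::] d)).
Qed.

Lemma sh10_S u r : sh [:: true; false] u ++ S_ [::] ++ r =G S_ [::] ++ sh [:: false; true] u ++ r.
Proof.
rewrite catA (@sh_conj _ [:: false; true]) ?catA // => k d.
exact: (ald_rel_eq (rel_S10 k [::] d)).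
Qed.

Lemma sh11_S u r : sh [:: true; true] u ++ S_ [::] ++ r =G S_ [::] ++ sh [:: true; true] u ++ r.
Proof.
rewrite catA (@sh_conj _ [:: true; true]) ?catA // => k d.
exact: (ald_rel_eq (rel_S11 k [::] d)).
Qed.

Lemma sh0_A u r : sh [:: false] u ++ A_ [::] ++ r =G A_ [::] ++ sh [:: false; false] u ++ r.
Proof.
rewrite catA (@sh_conj _ [:: false; false]) ?catA // => k d.
exact: (ald_rel_eq (rel_A0 k [::] d)).
Qed.

Lemma sh10_A u r : sh [:: true; false] u ++ A_ [::] ++ r =G A_ [::] ++ sh [:: false; true] u ++ r.
Proof.
rewrite catA (@sh_conj _ [:: false; true]) ?catA // => k d.
exact: (ald_rel_eq (rel_A10 k [::] d)).
Qed.

Lemma sh11_A u r : sh [:: true; true] u ++ A_ [::] ++ r =G A_ [::] ++ sh [:: true] u ++ r.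
Proof.
rewrite catA (@sh_conj _ [:: true]) ?catA // => k d.
exact: (ald_rel_eq (rel_A11 k [::] d)).
Qed.

Lemma SSS_root r : S_ [::] ++ S_ [:: true] ++ S_ [::] ++ r =G
  S_ [:: true] ++ S_ [::] ++ S_ [:: true] ++ S_ [:: false] ++ r.
Proof. by rewrite !catA; apply: cat_ald_eq => //; exact: (ald_rel_eq (rel_SSS [::])). Qed.

Lemma SSA_root r : S_ [::] ++ S_ [:: true] ++ A_ [::] ++ r =G
  A_ [:: true] ++ S_ [::] ++ S_ [:: false] ++ r.
Proof. by rewrite !catA; apply: cat_ald_eq => //; exact: (ald_rel_eq (rel_SSA [::])). Qed.

Lemma AS_root r : A_ [::] ++ S_ [::] ++ r =G
  S_ [:: true] ++ S_ [::] ++ A_ [:: true] ++ A_ [:: false] ++ r.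
Proof. by rewrite !catA; apply: cat_ald_eq => //; exact: (ald_rel_eq (rel_AS [::])). Qed.

Lemma sh_comm_tail x y a b u v r : x != y ->
  sh (x :: a) u ++ sh (y :: b) v ++ r =G sh (y :: b) v ++ sh (x :: a) u ++ r.
Proof. by move=> Hxy; rewrite !catA (sh_comm a b u v Hxy). Qed.

Lemma sh_S p a : sh p (S_ a) = S_ (p ++ a). Proof. by []. Qed.
Lemma sh_A p a : sh p (A_ a) = A_ (p ++ a). Proof. by []. Qed.
Lemma sh_SV p a : sh p (winv (S_ a)) = winv (S_ (p ++ a)). Proof. by []. Qed.
Lemma sh_AV p a : sh p (winv (A_ a)) = winv (A_ (p ++ a)). Proof. by []. Qed.

Ltac expand_ops := rewrite /ald_star /ald_circ;
  repeat progress rewrite ?sh_cat ?winv_cat ?sh_S ?sh_A ?sh_SV ?sh_AV ?winv_sh ?winvK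
                          ?sh_sh ?(@cat1s bool) ?cats0;
  rewrite -?catA.

(* Words are kept right-nested; padding with [::] gives the last factor a tail
   too, so the lemmas stated with a tail r apply to every factor. *)
Lemma eq_cats0 x y : x ++ [::] =G y -> x =G y.
Proof. by rewrite cats0. Qed.

Lemma shVK p w r : sh p (winv w) ++ sh p w ++ r =G r.
Proof. by rewrite -winv_sh mulKw. Qed.

Lemma shKV p w r : sh p w ++ sh p (winv w) ++ r =G r.
Proof. by rewrite -winv_sh mulKVw. Qed.

Lemma star_self_distr a b c :
  ald_star (ald_star a b) (ald_star a c) =G ald_star a (ald_star b c) ++ S_ [:: false].
Proof.
expand_ops; rewrite (sh11_S (winv b)); apply: eq_cats0; rewrite -!catA.
rewrite (shVK [:: true] a) (sh11_S (winv a)) shVK -(sh11_S c) SSS_root.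
rewrite (@sh_comm_tail false true [::] [::] (S_ [::]) (winv (S_ [::]))) // mulKVw.
rewrite (@sh_comm_tail false true [::] [:: true] (S_ [::]) (winv b)) //.
by rewrite (@sh_comm_tail false true [::] [::] (S_ [::]) (winv a)) // cats0.
Qed.

Lemma star_circ_distr a b c :
  ald_circ (ald_star a b) (ald_star a c) =G ald_star a (ald_circ b c) ++ S_ [:: false].
Proof.
expand_ops; apply: eq_cats0; rewrite -!catA.
rewrite (shVK [:: true] a) (sh11_A (winv a)) -(sh11_S c) SSA_root.
by rewrite (@sh_comm_tail false true [::] [::] (S_ [::]) (winv a)) // cats0.
Qed.

Lemma circ_star_assoc a b c :
  ald_star (ald_circ a b) c =G ald_star a (ald_star b c) ++ A_ [:: false].
Proof.
expand_ops; rewrite (sh11_S (winv b)); apply: eq_cats0; rewrite -!catA.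
rewrite -(sh11_A c) AS_root.
rewrite (@sh_comm_tail false true [::] [::] (A_ [::]) (winv (A_ [::]))) // mulKVw.
rewrite (@sh_comm_tail false true [::] [:: true] (A_ [::]) (winv b)) //.
by rewrite (@sh_comm_tail false true [::] [::] (A_ [::]) (winv a)) // cats0.
Qed.

Lemma star_sh0_cat g h u v :
  ald_star (g ++ sh [:: false] u) (h ++ sh [:: false] v) =G
  ald_star g h ++ sh [:: false] (sh [:: false] u ++ sh [:: true] v).
Proof.
expand_ops; apply: eq_cats0; rewrite -!catA.
rewrite (@sh_comm_tail false true [::] [::] u h) // (sh10_S v) (sh0_S u).
rewrite (@sh_comm_tail true false [:: false] [:: true] u v) // (shKV [:: true; false] u).
rewrite (@sh_comm_tail false true [:: true] [::] v (winv g)) //.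
by rewrite (@sh_comm_tail false true [:: false] [::] u (winv g)) // cats0.
Qed.

Lemma circ_sh0_cat g h u v :
  ald_circ (g ++ sh [:: false] u) (h ++ sh [:: false] v) =G
  ald_circ g h ++ sh [:: false] (sh [:: false] u ++ sh [:: true] v).
Proof.
expand_ops; apply: eq_cats0; rewrite -!catA.
by rewrite (@sh_comm_tail false true [::] [::] u h) // (sh10_A v) (sh0_A u) cats0.
Qed.

Lemma same_cosetP g g' : same_coset g g' <-> exists u, g' =G g ++ sh [:: false] u.
Proof.
split=> -[u Hu]; exists u; first by rewrite -Hu mulKVw.
by rewrite Hu mulKw.
Qed.

Lemma same_coset_star g g' h h' :
  same_coset g g' -> same_coset h h' -> same_coset (ald_star g h) (ald_star g' h').
Proof.
move=> /same_cosetP[u Hg] /same_cosetP[v Hh]; apply/same_cosetP.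
by exists (sh [:: false] u ++ sh [:: true] v); rewrite Hg Hh; apply: star_sh0_cat.
Qed.

Lemma same_coset_circ g g' h h' :
  same_coset g g' -> same_coset h h' -> same_coset (ald_circ g h) (ald_circ g' h').
Proof.
move=> /same_cosetP[u Hg] /same_cosetP[v Hh]; apply/same_cosetP.
by exists (sh [:: false] u ++ sh [:: true] v); rewrite Hg Hh; apply: circ_sh0_cat.
Qed.

Theorem proposition4p4 :
  (* well-definedness of * and o on M = G_ALD / H (left cosets) *)
  (forall g g' h h' : word, same_coset g g' -> same_coset h h' ->
     same_coset (ald_star g h) (ald_star g' h') /\
     same_coset (ald_circ g h) (ald_circ g' h')) /\
  (* the ALD-algebra laws in M *)
  (forall a b c : word,
     same_coset (ald_star a (ald_star b c)) (ald_star (ald_star a b) (ald_star a c)) /\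
     same_coset (ald_star a (ald_circ b c)) (ald_circ (ald_star a b) (ald_star a c)) /\
     same_coset (ald_star a (ald_star b c)) (ald_star (ald_circ a b) c)).
Proof.
split=> [g g' h h' Hg Hh | a b c].
  by split; [apply: same_coset_star | apply: same_coset_circ].
split; last split; apply/same_cosetP.
- by exists (S_ [::]); apply: star_self_distr.
- by exists (S_ [::]); apply: star_circ_distr.
- by exists (A_ [::]); apply: circ_star_assoc.
Qed.
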